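(* Let $W$ be the affine Weyl group of an irreducible reduced crystallographic root system $\Phi$ of rank 2 (so $W$ is generated by $S=\{s_0,s_1,s_2\}$ and its alcoves are triangles tiling the plane). Let $\alpha\in\Phi$, $c\in\mathbb{Z}$, and let $r_0,r_1,r_2$ be the reflections in the hyperplanes $H_{\alpha,c},H_{\alpha,c+1},H_{\alpha,c+2}$ respectively (three adjacent parallel reflections). Let $x\in W$ be an element whose alcove lies in the closed strip between $H_{r_0}$ and $H_{r_1}$, and suppose $$\ell(r_2r_1x)=\ell(r_1x)+1=\ell(x)+2.$$ Then $\ell(r_0x)=\ell(x)\pm 1$.
   Context: Let $E$ be a Euclidean plane with inner product $\langle\cdot,\cdot\rangle$, $\Phi\subset E$ an irreducible reduced crystallographic root system of rank 2 (type $A_2$, $B_2$ or $G_2$). For $\beta\in\Phi$ put $\beta^\vee=2\beta/\langle\beta,\beta\rangle$; for $k\in\mathbb{Z}$ put $H_{\beta,k}=\{v\in E:\langle v,\beta\rangle=k\}$ and $s_{\beta;k}(v)=v-(\langle v,\beta\rangle-k)\beta^\vee$. The affine Weyl group $W$ is generated by all $s_{\beta;k}$; it is a Coxeter group whose simple generators $s_0,s_1,s_2$ are the reflections in the three walls of the fundamental alcove $A_0$ (the connected component of $E\setminus\bigcup H_{\beta,k}$ containing small positive multiples of the dominant direction, with $0$ in its closure), $s_0$ being the reflection in the wall not containing $0$. Alcoves are the connected components of $E\setminus\bigcup_{\beta,k}H_{\beta,k}$; $W$ acts simply transitively on them and $w\in W$ is identified with the alcove $wA_0$. The reflections of $W$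 (conjugates of simple generators) are exactly the $s_{\beta;k}$, and $H_r$ denotes the hyperplane fixed by a reflection $r$. $\ell$ is the Coxeter length; for a reflection $r$ one has $\ell(rx)>\ell(x)$ iff the alcove $x$ lies on the same side of $H_r$ as $A_0$. *)

From Stdlib Require Import Reals List ZArith.
Open Scope R_scope.

Inductive rtype := A2 | B2 | G2.

(** The Euclidean plane E = R^2, coordinates taken w.r.t. the basis of
    simple roots (alpha1, alpha2); the inner product is given by the Gram
    matrix of the simple roots (positive definite). *)
Definition E := (R * R)%type.

(** Gram matrix entries (g11, g12, g22) = (<a1,a1>, <a1,a2>, <a2,a2>).
    A2: both roots of squared length 2, angle 120 deg.
    B2: a1 long (2), a2 short (1), angle 135 deg.
    G2: a1 short (2), a2 long (6), angle 150 deg. *)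
Definition gram (t : rtype) : R * R * R :=
  match t with
  | A2 => (2, -1, 2)
  | B2 => (2, -1, 1)
  | G2 => (2, -3, 6)
  end.

Definition ip (t : rtype) (u v : E) : R :=
  let '(g11, g12, g22) := gram t in
  g11 * fst u * fst v + g12 * (fst u * snd v + snd u * fst v)
  + g22 * snd u * snd v.

Definition alpha1 : E := (1, 0).
Definition alpha2 : E := (0, 1).

Definition pos_roots (t : rtype) : list E :=
  match t with
  | A2 => (1,0) :: (0,1) :: (1,1) :: nil
  | B2 => (1,0) :: (0,1) :: (1,1) :: (1,2) :: nil
  | G2 => (1,0) :: (0,1) :: (1,1) :: (2,1) :: (3,1) :: (3,2) :: nil
  end.

Definition theta (t : rtype) : E :=
  match t with
  | A2 => (1,1)
  | B2 => (1,2)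
  | G2 => (3,2)
  end.

Definition vopp (v : E) : E := (- fst v, - snd v).

Definition Phi (t : rtype) : list E := pos_roots t ++ map vopp (pos_roots t).

Definition refl (t : rtype) (beta : E) (k : R) (v : E) : E :=
  let m := (ip t v beta - k) * (2 / ip t beta beta) in
  (fst v - m * fst beta, snd v - m * snd beta).

Definition A0 (t : rtype) (v : E) : Prop :=
  0 < ip t v alpha1 /\ 0 < ip t v alpha2 /\ ip t v (theta t) < 1.

Inductive gen := S0 | S1 | S2.

Definition simple (t : rtype) (s : gen) : E -> E :=
  match s with
  | S0 => refl t (theta t) 1
  | S1 => refl t alpha1 0
  | S2 => refl t alpha2 0
  end.

(** A word [s_1; ...; s_k] evaluates to the map s_1 o ... o s_k. *)
Definition word_eval (t : rtype) (w : list gen) : E -> E :=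
  fold_right (fun s f => fun v => simple t s (f v)) (fun v => v) w.

Definition represents (t : rtype) (w : list gen) (f : E -> E) : Prop :=
  forall v, f v = word_eval t w v.

Definition coxeter_length (t : rtype) (f : E -> E) (n : nat) : Prop :=
  (exists w, length w = n /\ represents t w f) /\
  (forall w, represents t w f -> (n <= length w)%nat).

From Stdlib Require Import Reals List ZArith Lra Lia Permutation Bool.
Import ListNotations.
Open Scope R_scope.

(* For generic points v and w, [sep t v w] counts the walls H_{b,k} separating them.
   Reflections of W preserve [sep]; a reflection in a wall separating v from w decreases
   [sep t v w]; a simple reflection changes [sep t v p], for p in A0, by exactly one; and
   only the identity of W fixes A0.  Hence l(x) = sep t (x p) p.

   Let y = x p and tau = <y, alpha> - c, so 0 < tau < 1.  The points r0 y = y - tau alpha^vee,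
   y, r1 y = y + (1 - tau) alpha^vee and r2 r1 y = y + alpha^vee are collinear, and a Monge
   inequality for differences of floors, applied root by root, gives
   l(x) - l(r0 x) <= l(r2 r1 x) - l(r1 x) = 1.  Since r0 = r1 r2 r1 and H_{r1} separates
   r2 r1 y from A0, l(r0 x) < l(r2 r1 x) = l(x) + 2.  Finally r0 x = (r1 x) x^-1 (r2 r1 x)
   forces l(r0 x) = l(x) + 1 mod 2. *)

(** * Floors *)

Lemma Int_part_eq r m : IZR m <= r < IZR m + 1 -> Int_part r = m.
Proof. intros Hr. symmetry. apply Int_part_spec. lra. Qed.

Lemma Int_part_bounds r : IZR (Int_part r) <= r < IZR (Int_part r) + 1.
Proof. pose proof (base_Int_part r). lra. Qed.

Lemma Int_part_lt r m : r < IZR m -> (Int_part r < m)%Z.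
Proof. intros Hr. pose proof (Int_part_bounds r). apply lt_IZR. lra. Qed.

Lemma Int_part_ge r m : IZR m <= r -> (m <= Int_part r)%Z.
Proof.
  intros Hr. pose proof (Int_part_bounds r).
  assert (Hlt : IZR m < IZR (Int_part r + 1)) by (rewrite plus_IZR; lra).
  apply lt_IZR in Hlt. lia.
Qed.

Lemma Int_part_le r s : r <= s -> (Int_part r <= Int_part s)%Z.
Proof. intros Hrs. apply Int_part_ge. pose proof (Int_part_bounds r). lra. Qed.

Lemma Int_part_add_IZR r m : Int_part (r + IZR m) = (Int_part r + m)%Z.
Proof. apply Int_part_eq. rewrite plus_IZR. pose proof (Int_part_bounds r). lra. Qed.

Lemma Int_part_opp r : (forall n, r <> IZR n) -> Int_part (- r) = (- Int_part r - 1)%Z.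
Proof.
  intros Hr. apply Int_part_eq. pose proof (Int_part_bounds r).
  pose proof (Hr (Int_part r)). rewrite minus_IZR, opp_IZR. lra.
Qed.

Definition floor_dist (x y : R) : Z := Z.abs (Int_part x - Int_part y).

Lemma floor_dist_shift x y m : floor_dist (x + IZR m) (y + IZR m) = floor_dist x y.
Proof. unfold floor_dist. rewrite !Int_part_add_IZR. f_equal. lia. Qed.

Lemma floor_dist_opp x y : (forall n, x <> IZR n) -> (forall n, y <> IZR n) ->
  floor_dist (- x) (- y) = floor_dist x y.
Proof. intros Hx Hy. unfold floor_dist. rewrite !Int_part_opp by assumption. lia. Qed.

Lemma floor_dist_cycle x y z :
  exists q, (floor_dist x y + floor_dist y z + floor_dist x z = 2 * q)%Z.
Proof.
  unfold floor_dist.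
  exists (Z.max (Int_part x) (Z.max (Int_part y) (Int_part z))
          - Z.min (Int_part x) (Z.min (Int_part y) (Int_part z)))%Z.
  lia.
Qed.

(* The Monge inequality |a - c| + |b - d| <= |b - c| + |a - d| for b <= a and d <= c,
   applied to floors. *)
Lemma floor_dist_monge u p x w : 0 <= x * w ->
  (floor_dist u p + floor_dist (u - x) (p - w) <=
   floor_dist (u - x) p + floor_dist u (p - w))%Z.
Proof.
  intros Hxw. unfold floor_dist.
  assert (Hsign : (0 <= x /\ 0 <= w) \/ (x <= 0 /\ w <= 0)).
  { destruct (Rle_dec 0 x), (Rle_dec 0 w); [left | right | right | right]; split; nra. }
  destruct Hsign as [[Hx Hw] | [Hx Hw]].
  - assert (Int_part (u - x) <= Int_part u)%Z by (apply Int_part_le; lra).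
    assert (Int_part (p - w) <= Int_part p)%Z by (apply Int_part_le; lra). lia.
  - assert (Int_part u <= Int_part (u - x))%Z by (apply Int_part_le; lra).
    assert (Int_part p <= Int_part (p - w))%Z by (apply Int_part_le; lra). lia.
Qed.

Lemma floor_dist_pair u e p q k m : (e - IZR k) * (q - IZR k) <= 0 ->
  (floor_dist (u - (e - IZR k) * IZR m) p + floor_dist (u - IZR k * IZR m) (p - IZR m * q) <=
   floor_dist u p + floor_dist (u - IZR m * e) (p - IZR m * q))%Z.
Proof.
  intros Hkq.
  assert (Hprod : 0 <= (e - IZR k) * IZR m * - ((q - IZR k) * IZR m)).
  { replace ((e - IZR k) * IZR m * - ((q - IZR k) * IZR m))
      with (- ((e - IZR k) * (q - IZR k)) * (IZR m * IZR m)) by ring.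
    apply Rmult_le_pos; nra. }
  pose proof (floor_dist_monge u (p - (q - IZR k) * IZR m) _ _ Hprod) as H.
  replace (p - (q - IZR k) * IZR m - - ((q - IZR k) * IZR m)) with p in H by ring.
  rewrite <- (floor_dist_shift (u - IZR k * IZR m) (p - IZR m * q) (k * m)).
  rewrite <- (floor_dist_shift (u - IZR m * e) (p - IZR m * q) (k * m)).
  rewrite mult_IZR.
  replace (u - IZR k * IZR m + IZR k * IZR m) with u by ring.
  replace (p - IZR m * q + IZR k * IZR m) with (p - (q - IZR k) * IZR m) by ring.
  replace (u - IZR m * e + IZR k * IZR m) with (u - (e - IZR k) * IZR m) by ring.
  lia.
Qed.

Lemma floor_dist_reflect e q k : (forall n, e <> IZR n) ->
  q < IZR k < e \/ e < IZR k < q ->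
  (floor_dist (2 * IZR k - e) q + 1 <= floor_dist e q)%Z.
Proof.
  intros He Hk. unfold floor_dist.
  replace (2 * IZR k - e) with (- e + IZR (2 * k)) by (rewrite mult_IZR; ring).
  rewrite Int_part_add_IZR, Int_part_opp by assumption.
  destruct Hk as [[Hqk Hke] | [Hek Hkq]].
  - assert (Int_part q < k)%Z by (apply Int_part_lt; lra).
    assert (k <= Int_part e)%Z by (apply Int_part_ge; lra). lia.
  - assert (Int_part e < k)%Z by (apply Int_part_lt; lra).
    assert (k <= Int_part q)%Z by (apply Int_part_ge; lra). lia.
Qed.


(** * Finite sums *)

Definition zsum {A : Type} (f : A -> Z) (l : list A) : Z :=
  fold_right (fun x acc => (f x + acc)%Z) 0%Z l.

Lemma zsum_cons {A} (f : A -> Z) x l : zsum f (x :: l) = (f x + zsum f l)%Z.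
Proof. reflexivity. Qed.

Lemma zsum_app {A} (f : A -> Z) l1 l2 : zsum f (l1 ++ l2) = (zsum f l1 + zsum f l2)%Z.
Proof. induction l1 as [|x l1 IH]; cbn [app]; rewrite ?zsum_cons, ?IH; reflexivity || lia. Qed.

Lemma zsum_map {A B} (f : B -> Z) (g : A -> B) l : zsum f (map g l) = zsum (fun x => f (g x)) l.
Proof. induction l as [|x l IH]; cbn [map]; rewrite ?zsum_cons, ?IH; reflexivity. Qed.

Lemma zsum_perm {A} (f : A -> Z) l l' : Permutation l l' -> zsum f l = zsum f l'.
Proof. induction 1; rewrite ?zsum_cons; lia. Qed.

Lemma zsum_add {A} (f g : A -> Z) l : zsum (fun x => f x + g x)%Z l = (zsum f l + zsum g l)%Z.
Proof. induction l as [|x l IH]; rewrite ?zsum_cons; [reflexivity | lia]. Qed.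

Lemma zsum_ext {A} (f g : A -> Z) l : (forall x, In x l -> f x = g x) -> zsum f l = zsum g l.
Proof.
  induction l as [|x l IH]; intros Hfg; rewrite ?zsum_cons; [reflexivity|].
  rewrite (Hfg x (or_introl eq_refl)), IH; [reflexivity|].
  intros y Hy. apply Hfg. right; exact Hy.
Qed.

Lemma zsum_zero {A} (f : A -> Z) l : (forall x, In x l -> f x = 0%Z) -> zsum f l = 0%Z.
Proof.
  induction l as [|x l IH]; intros Hf; rewrite ?zsum_cons; [reflexivity|].
  rewrite (Hf x (or_introl eq_refl)), IH; [reflexivity|]. intros y Hy. apply Hf. right; exact Hy.
Qed.

Lemma zsum_le {A} (f g : A -> Z) l :
  (forall x, In x l -> f x <= g x)%Z -> (zsum f l <= zsum g l)%Z.
Proof.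
  induction l as [|x l IH]; intros Hfg; rewrite ?zsum_cons; [reflexivity|].
  specialize (Hfg x (or_introl eq_refl)) as Hx. specialize (IH (fun y Hy => Hfg y (or_intror Hy))).
  lia.
Qed.

Lemma zsum_strict {A} (f g : A -> Z) l x d :
  (forall y, In y l -> f y <= g y)%Z -> In x l -> (f x + d <= g x)%Z ->
  (zsum f l + d <= zsum g l)%Z.
Proof.
  induction l as [|y l IH]; intros Hfg Hx Hd; [destruct Hx|]. rewrite !zsum_cons.
  pose proof (zsum_le f g l (fun z Hz => Hfg z (or_intror Hz))).
  pose proof (Hfg y (or_introl eq_refl)).
  destruct Hx as [<- | Hx]; [lia|].
  specialize (IH (fun z Hz => Hfg z (or_intror Hz)) Hx Hd). lia.
Qed.

Lemma zsum_nonneg {A} (f : A -> Z) l : (forall y, In y l -> 0 <= f y)%Z -> (0 <= zsum f l)%Z.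
Proof.
  induction l as [|y l IH]; intros Hpos; rewrite ?zsum_cons; [reflexivity|].
  specialize (Hpos y (or_introl eq_refl)) as Hy.
  specialize (IH (fun z Hz => Hpos z (or_intror Hz))).
  lia.
Qed.

Lemma zsum_term_le {A} (f : A -> Z) l x :
  (forall y, In y l -> 0 <= f y)%Z -> In x l -> (f x <= zsum f l)%Z.
Proof.
  intros Hpos Hx.
  pose proof (zsum_strict (fun _ => 0%Z) f l x (f x) Hpos Hx ltac:(cbv beta; lia)) as H.
  assert (H0 : zsum (fun _ : A => 0%Z) l = 0%Z) by (apply zsum_zero; reflexivity). lia.
Qed.

(** * Root data *)

Definition IZR2 (b : Z * Z) : E := (IZR (fst b), IZR (snd b)).

Definition zopp (b : Z * Z) : Z * Z := (- fst b, - snd b)%Z.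

Definition zpos_roots (t : rtype) : list (Z * Z) :=
  match t with
  | A2 => [(1,0); (0,1); (1,1)]
  | B2 => [(1,0); (0,1); (1,1); (1,2)]
  | G2 => [(1,0); (0,1); (1,1); (2,1); (3,1); (3,2)]
  end%Z.

Definition zroots (t : rtype) : list (Z * Z) := zpos_roots t ++ map zopp (zpos_roots t).

Definition ztheta (t : rtype) : Z * Z :=
  match t with A2 => (1,1) | B2 => (1,2) | G2 => (3,2) end%Z.

Lemma pos_roots_IZR2 t : pos_roots t = map IZR2 (zpos_roots t).
Proof. destruct t; reflexivity. Qed.

Lemma Phi_IZR2 t : Phi t = map IZR2 (zroots t).
Proof.
  unfold Phi, zroots. rewrite map_app, map_map, pos_roots_IZR2, map_map. f_equal.
  apply map_ext. intros b. unfold IZR2, zopp, vopp. cbn [fst snd]. now rewrite !opp_IZR.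
Qed.

Definition zgram (t : rtype) : Z * Z * Z :=
  match t with A2 => (2, -1, 2) | B2 => (2, -1, 1) | G2 => (2, -3, 6) end%Z.

Definition ipZ (t : rtype) (u v : Z * Z) : Z :=
  let '(g11, g12, g22) := zgram t in
  (g11 * fst u * fst v + g12 * (fst u * snd v + snd u * fst v) + g22 * snd u * snd v)%Z.

Lemma ip_IZR2 t u v : ip t (IZR2 u) (IZR2 v) = IZR (ipZ t u v).
Proof.
  destruct t; unfold ip, ipZ, IZR2; cbn [gram zgram fst snd];
  repeat rewrite ?plus_IZR, ?mult_IZR; ring.
Qed.

Lemma ipZ_linear_r t u v : ipZ t u v = (fst v * ipZ t u (1,0) + snd v * ipZ t u (0,1))%Z.
Proof. destruct t; unfold ipZ; cbn [zgram fst snd]; ring. Qed.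

(* [coroot t a] = (<alpha1, a^vee>, <alpha2, a^vee>); the divisions are exact for roots
   (checked in [root_axioms]), so that [cartan t a b] = <b, a^vee>. *)
Definition coroot (t : rtype) (a : Z * Z) : Z * Z :=
  ((2 * ipZ t a (1,0)) / ipZ t a a, (2 * ipZ t a (0,1)) / ipZ t a a)%Z.

Definition cartan (t : rtype) (a b : Z * Z) : Z :=
  (fst b * fst (coroot t a) + snd b * snd (coroot t a))%Z.

Definition zrefl (t : rtype) (a b : Z * Z) : Z * Z :=
  (fst b - cartan t a b * fst a, snd b - cartan t a b * snd a)%Z.

Definition inb {A} (dec : forall x y : A, {x = y} + {x <> y}) (x : A) (l : list A) : bool :=
  if in_dec dec x l then true else false.

Lemma inb_In {A} dec (x : A) l : inb dec x l = true -> In x l.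
Proof. unfold inb. destruct in_dec; [trivial | discriminate]. Qed.

Definition zpair_eq_dec (u v : Z * Z) : {u = v} + {u <> v}.
Proof. decide equality; apply Z.eq_dec. Defined.

Definition root_axioms (t : rtype) (a : Z * Z) : bool :=
  (0 <? ipZ t a a)%Z
  && (ipZ t a a * fst (coroot t a) =? 2 * ipZ t a (1,0))%Z
  && (ipZ t a a * snd (coroot t a) =? 2 * ipZ t a (0,1))%Z
  && (cartan t a a =? 2)%Z
  && forallb (fun b => inb zpair_eq_dec (zrefl t a b) (zroots t)) (zroots t).

Lemma root_axioms_hold t : forallb (root_axioms t) (zroots t) = true.
Proof. destruct t; vm_compute; reflexivity. Qed.

Lemma zroots_NoDup t : NoDup (zroots t).
Proof. destruct t; repeat constructor; cbn; intuition discriminate. Qed.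

Section RootAxioms.

Variables (t : rtype) (a : Z * Z).
Hypothesis Ha : In a (zroots t).

Let axioms : root_axioms t a = true.
Proof. exact (proj1 (forallb_forall _ _) (root_axioms_hold t) a Ha). Qed.

Lemma ipZ_root_pos : (0 < ipZ t a a)%Z.
Proof.
  pose proof axioms as H. unfold root_axioms in H. rewrite !andb_true_iff, Z.ltb_lt in H. tauto.
Qed.

Lemma cartan_diag : cartan t a a = 2%Z.
Proof.
  pose proof axioms as H. unfold root_axioms in H. rewrite !andb_true_iff, !Z.eqb_eq in H. tauto.
Qed.

Lemma cartan_ipZ b : (ipZ t a a * cartan t a b = 2 * ipZ t a b)%Z.
Proof.
  pose proof axioms as H. unfold root_axioms in H. rewrite !andb_true_iff, !Z.eqb_eq in H.
  destruct H as [[[[_ H1] H2] _] _]. rewrite (ipZ_linear_r t a b). unfold cartan. nia.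
Qed.

Lemma zrefl_root b : In b (zroots t) -> In (zrefl t a b) (zroots t).
Proof.
  pose proof axioms as H. unfold root_axioms in H. rewrite !andb_true_iff, forallb_forall in H.
  intros Hb. apply (inb_In zpair_eq_dec), (proj2 H b Hb).
Qed.

Lemma ip_root_neq0 : ip t (IZR2 a) (IZR2 a) <> 0.
Proof. rewrite ip_IZR2. apply not_0_IZR. pose proof ipZ_root_pos. lia. Qed.

Lemma cartan_ip b : 2 * ip t (IZR2 a) (IZR2 b) / ip t (IZR2 a) (IZR2 a) = IZR (cartan t a b).
Proof.
  pose proof ip_root_neq0 as Hnz. pose proof (f_equal IZR (cartan_ipZ b)) as H.
  rewrite !mult_IZR in H. rewrite ip_IZR2 in Hnz. rewrite !ip_IZR2.
  field_simplify_eq; [lra | exact Hnz].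
Qed.

Lemma cartan_zrefl b : cartan t a (zrefl t a b) = (- cartan t a b)%Z.
Proof.
  transitivity (cartan t a b - cartan t a b * cartan t a a)%Z.
  - unfold zrefl, cartan; cbn [fst snd]. ring.
  - rewrite cartan_diag. ring.
Qed.

Lemma zrefl_involutive b : zrefl t a (zrefl t a b) = b.
Proof.
  unfold zrefl at 1. rewrite cartan_zrefl.
  destruct b; unfold zrefl; cbn [fst snd]. f_equal; ring.
Qed.

Lemma zrefl_diag : zrefl t a a = zopp a.
Proof. unfold zrefl, zopp. rewrite cartan_diag. f_equal; ring. Qed.

Lemma zrefl_perm : Permutation (map (zrefl t a) (zroots t)) (zroots t).
Proof.
  apply Permutation_map_same_l.
  - apply FinFun.Injective_map_NoDup; [| apply zroots_NoDup].
    intros b c Hbc. rewrite <- (zrefl_involutive b), Hbc. apply zrefl_involutive.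
  - intros b Hb. apply in_map_iff in Hb as [c [<- Hc]]. apply zrefl_root, Hc.
Qed.

End RootAxioms.


Definition rval (t : rtype) (b : Z * Z) (v : E) : R := ip t v (IZR2 b).

Lemma rval_linear t b v :
  rval t b v = IZR (fst b) * rval t (1,0)%Z v + IZR (snd b) * rval t (0,1)%Z v.
Proof. destruct t, v; unfold rval, ip, IZR2; cbn [gram fst snd]; ring. Qed.

Lemma rval_zopp t b v : rval t (zopp b) v = - rval t b v.
Proof. destruct t; unfold rval, ip, IZR2, zopp; cbn [gram fst snd]; rewrite !opp_IZR; ring. Qed.

Lemma rval_zrefl t a b v :
  rval t (zrefl t a b) v = rval t b v - IZR (cartan t a b) * rval t a v.
Proof.
  destruct t; unfold rval, ip, IZR2, zrefl; cbn [gram fst snd];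
  rewrite !minus_IZR, !mult_IZR; ring.
Qed.

Lemma rval_refl t a b k v : In a (zroots t) ->
  rval t b (refl t (IZR2 a) k v) = rval t b v - (rval t a v - k) * IZR (cartan t a b).
Proof.
  intros Ha. rewrite <- (cartan_ip t a Ha b). unfold rval, refl.
  destruct t, v; unfold ip; cbn [gram fst snd]; unfold Rdiv; ring.
Qed.

Lemma rval_refl_zrefl t a b k v : In a (zroots t) ->
  rval t b (refl t (IZR2 a) (IZR k) v) = rval t (zrefl t a b) v + IZR (k * cartan t a b).
Proof. intros Ha. rewrite rval_refl, rval_zrefl, mult_IZR by exact Ha. ring. Qed.

Lemma refl_involutive t a k v : ip t a a <> 0 -> refl t a k (refl t a k v) = v.
Proof.
  destruct t, a as [a1 a2], v as [v1 v2]; unfold refl, ip; cbn [gram fst snd]; intros Hnz;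
  f_equal; field; contradict Hnz; lra.
Qed.

Lemma refl_parallel t a (k : Z) v : ip t a a <> 0 ->
  refl t a (IZR (k + 1)) (refl t a (IZR (k + 2)) (refl t a (IZR (k + 1)) v)) = refl t a (IZR k) v.
Proof.
  rewrite !plus_IZR.
  destruct t, a as [a1 a2], v as [v1 v2]; unfold refl, ip; cbn [gram fst snd]; intros Hnz;
  f_equal; field; contradict Hnz; lra.
Qed.

(** * Counting separating walls *)

Definition generic (t : rtype) (v : E) : Prop :=
  forall b, In b (zroots t) -> forall n : Z, rval t b v <> IZR n.

Definition sep_on (t : rtype) (l : list (Z * Z)) (v w : E) : Z :=
  zsum (fun b => floor_dist (rval t b v) (rval t b w)) l.

Definition sep (t : rtype) (v w : E) : Z := sep_on t (zpos_roots t) v w.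

Lemma sep_on_zroots t v w : generic t v -> generic t w ->
  sep_on t (zroots t) v w = (2 * sep t v w)%Z.
Proof.
  intros Hv Hw. unfold sep, sep_on, zroots. rewrite zsum_app, zsum_map. cbv beta.
  rewrite (zsum_ext (fun b => floor_dist (rval t (zopp b) v) (rval t (zopp b) w))
                    (fun b => floor_dist (rval t b v) (rval t b w))); [lia|].
  intros b Hb. rewrite !rval_zopp. apply floor_dist_opp.
  - apply Hv, in_or_app; left; exact Hb.
  - apply Hw, in_or_app; left; exact Hb.
Qed.

Lemma sep_nonneg t v w : (0 <= sep t v w)%Z.
Proof. apply zsum_nonneg. intros b _. apply Z.abs_nonneg. Qed.

Lemma sep_diag t v : sep t v v = 0%Z.
Proof. apply zsum_zero. intros b _. unfold floor_dist. lia. Qed.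

Lemma sep_sym t v w : sep t v w = sep t w v.
Proof. apply zsum_ext. intros b _. unfold floor_dist. lia. Qed.

Lemma sep_triangle t u v w : (sep t u w <= sep t u v + sep t v w)%Z.
Proof.
  unfold sep, sep_on. rewrite <- zsum_add. apply zsum_le. intros b _. cbv beta.
  unfold floor_dist. lia.
Qed.

Lemma sep_cycle_even t u v w : exists q, (sep t u v + sep t v w + sep t u w = 2 * q)%Z.
Proof.
  unfold sep, sep_on. induction (zpos_roots t) as [|b l [q IH]]; [exists 0%Z; reflexivity|].
  destruct (floor_dist_cycle (rval t b u) (rval t b v) (rval t b w)) as [r Hr].
  exists (q + r)%Z. rewrite !zsum_cons. lia.
Qed.

Lemma generic_refl t a k v : In a (zroots t) -> generic t v ->
  generic t (refl t (IZR2 a) (IZR k) v).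
Proof.
  intros Ha Hv b Hb n. rewrite rval_refl_zrefl by exact Ha. intros Hn.
  apply (Hv (zrefl t a b) (zrefl_root t a Ha b Hb) (n - k * cartan t a b)%Z).
  rewrite minus_IZR. lra.
Qed.

Lemma sep_refl_refl t a k v w : In a (zroots t) -> generic t v -> generic t w ->
  sep t (refl t (IZR2 a) (IZR k) v) (refl t (IZR2 a) (IZR k) w) = sep t v w.
Proof.
  intros Ha Hv Hw.
  enough (sep_on t (zroots t) (refl t (IZR2 a) (IZR k) v) (refl t (IZR2 a) (IZR k) w)
          = sep_on t (zroots t) v w) as H.
  { rewrite !sep_on_zroots in H by (try apply generic_refl; assumption). lia. }
  unfold sep_on.
  rewrite <- (zsum_perm (fun b => floor_dist (rval t b v) (rval t b w)) _ _ (zrefl_perm t a Ha)).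
  rewrite zsum_map. apply zsum_ext. intros b _.
  rewrite !rval_refl_zrefl by exact Ha. apply floor_dist_shift.
Qed.

Section SeparatingReflection.

Variables (t : rtype) (a : Z * Z) (k : Z) (v w : E).
Hypothesis Ha : In a (zroots t).

Let s := refl t (IZR2 a) (IZR k).

(* The families of walls orthogonal to b and to s_a b are exchanged by s. *)
Lemma floor_dist_refl_pair b : (rval t a v - IZR k) * (rval t a w - IZR k) <= 0 ->
  (floor_dist (rval t b (s v)) (rval t b w)
   + floor_dist (rval t (zrefl t a b) (s v)) (rval t (zrefl t a b) w) <=
   floor_dist (rval t b v) (rval t b w)
   + floor_dist (rval t (zrefl t a b) v) (rval t (zrefl t a b) w))%Z.
Proof.
  intros Hk. unfold s. rewrite !rval_refl, !rval_zrefl, cartan_zrefl, opp_IZR by exact Ha.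
  replace (rval t b v - IZR (cartan t a b) * rval t a v
           - (rval t a v - IZR k) * - IZR (cartan t a b))
    with (rval t b v - IZR k * IZR (cartan t a b)) by ring.
  apply floor_dist_pair, Hk.
Qed.

Lemma sep_refl_lt : generic t v -> generic t w ->
  rval t a w < IZR k < rval t a v \/ rval t a v < IZR k < rval t a w ->
  (sep t (s v) w + 1 <= sep t v w)%Z.
Proof.
  intros Hv Hw Hk.
  assert (Hsv : generic t (s v)) by (apply generic_refl; assumption).
  set (f := fun b => floor_dist (rval t b (s v)) (rval t b w)).
  set (g := fun b => floor_dist (rval t b v) (rval t b w)).
  assert (Hopp : forall x, generic t x -> floor_dist (rval t (zopp a) x) (rval t (zopp a) w)
                                         = floor_dist (rval t a x) (rval t a w)).
  { intros x Hx. rewrite !rval_zopp. apply floor_dist_opp; [apply Hx | apply Hw]; exact Ha. }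
  assert (Hdiag : (f a + 1 <= g a)%Z).
  { unfold f, g, s. rewrite rval_refl, cartan_diag by exact Ha.
    replace (rval t a v - (rval t a v - IZR k) * IZR 2) with (2 * IZR k - rval t a v) by ring.
    apply floor_dist_reflect; [apply Hv, Ha | lra]. }
  assert (Hsum : (zsum (fun b => f b + f (zrefl t a b)) (zroots t) + 2 <=
                  zsum (fun b => g b + g (zrefl t a b)) (zroots t))%Z).
  { apply zsum_strict with a; [| exact Ha |].
    - intros b _. apply floor_dist_refl_pair. nra.
    - rewrite zrefl_diag by exact Ha. unfold f, g. rewrite !Hopp by assumption.
      fold (f a) (g a). lia. }
  rewrite !zsum_add, <- !(zsum_map _ (zrefl t a)), !(zsum_perm _ _ _ (zrefl_perm t a Ha)) in Hsum.
  change (zsum f (zroots t)) with (sep_on t (zroots t) (s v) w) in Hsum.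
  change (zsum g (zroots t)) with (sep_on t (zroots t) v w) in Hsum.
  rewrite !sep_on_zroots in Hsum by assumption. lia.
Qed.

End SeparatingReflection.

Lemma sep_refl_parallel t a c v w : In a (zroots t) -> IZR c <= rval t a v ->
  (sep t v w + sep t (refl t (IZR2 a) (IZR (c + 1)) v) w <=
   sep t (refl t (IZR2 a) (IZR (c + 2)) (refl t (IZR2 a) (IZR (c + 1)) v)) w
   + sep t (refl t (IZR2 a) (IZR c) v) w)%Z.
Proof.
  intros Ha Hc. unfold sep, sep_on. rewrite <- !zsum_add. apply zsum_le. intros b _. cbv beta.
  rewrite !rval_refl, cartan_diag, !plus_IZR by exact Ha.
  set (u := rval t b v). set (e := rval t a v). set (m := IZR (cartan t a b)).
  set (p := rval t b w).
  assert (Hprod : 0 <= (e - IZR c) * m * m).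
  { rewrite Rmult_assoc. apply Rmult_le_pos; [unfold e; lra | nra]. }
  pose proof (floor_dist_monge u p _ _ Hprod) as H.
  rewrite <- (floor_dist_shift (u - (e - IZR c) * m) (p - m) (cartan t a b)) in H.
  rewrite <- (floor_dist_shift u (p - m) (cartan t a b)) in H. fold m in H.
  replace (p - m + m) with p in H by ring.
  replace (u - (e - IZR c) * m + m) with (u - (e - (IZR c + 1)) * m) in H by ring.
  replace (u - (e - (IZR c + 1)) * m - (e - (e - (IZR c + 1)) * 2 - (IZR c + 2)) * m)
    with (u + m) by ring.
  lia.
Qed.

Section ParallelReflections.

Variables (t : rtype) (a : Z * Z) (c : Z) (v w : E).
Hypotheses (Ha : In a (zroots t)) (Hv : generic t v) (Hw : generic t w).

Lemma sep_refl_triple :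
  IZR c < rval t a v < IZR c + 1 ->
  sep t (refl t (IZR2 a) (IZR (c + 1)) v) w = (sep t v w + 1)%Z ->
  sep t (refl t (IZR2 a) (IZR (c + 2)) (refl t (IZR2 a) (IZR (c + 1)) v)) w = (sep t v w + 2)%Z ->
  (sep t v w - 1 <= sep t (refl t (IZR2 a) (IZR c) v) w <= sep t v w + 1)%Z.
Proof.
  intros Hstrip H1 H2.
  assert (Hside : rval t a w < IZR (c + 1)).
  { destruct (Rlt_le_dec (rval t a w) (IZR (c + 1))) as [Hlt | [Hgt | Heq]]; [exact Hlt | |].
    - exfalso.
      assert (Hsep : rval t a v < IZR (c + 1) < rval t a w) by (rewrite plus_IZR in *; lra).
      pose proof (sep_refl_lt t a (c + 1) v w Ha Hv Hw (or_intror Hsep)). lia.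
    - exfalso. exact (Hw a Ha (c + 1)%Z (eq_sym Heq)). }
  pose proof (sep_refl_parallel t a c v w Ha ltac:(lra)) as Hlower.
  assert (Hupper : (sep t (refl t (IZR2 a) (IZR c) v) w + 1 <=
                    sep t (refl t (IZR2 a) (IZR (c + 2)) (refl t (IZR2 a) (IZR (c + 1)) v)) w)%Z).
  { rewrite <- (refl_parallel t (IZR2 a) c v (ip_root_neq0 t a Ha)).
    apply sep_refl_lt; [exact Ha | repeat apply generic_refl; assumption | exact Hw |].
    left. split; [exact Hside|].
    rewrite !rval_refl, cartan_diag, !plus_IZR by exact Ha. lra. }
  lia.
Qed.

End ParallelReflections.

(** * The base point and the simple reflections *)

Definition base_point (t : rtype) : E :=
  match t with A2 => (1/100, 1/100) | B2 => (2/100, 3/100) | G2 => (3/100, 1/60) end.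

Definition height (b : Z * Z) : Z := (fst b + snd b)%Z.

Definition base_floor (b : Z * Z) : Z := if (0 <? height b)%Z then 0%Z else (-1)%Z.

Lemma A0_base_point t : A0 t (base_point t).
Proof. destruct t; unfold A0, ip, base_point, alpha1, alpha2, theta; cbn [gram fst snd]; lra. Qed.

Lemma rval_base_point t b : rval t b (base_point t) = IZR (height b) / 100.
Proof.
  rewrite rval_linear. unfold height. rewrite plus_IZR.
  destruct t; unfold rval, ip, base_point, IZR2; cbn [gram fst snd]; field.
Qed.

Lemma height_bounds t b : In b (zroots t) -> (0 < Z.abs (height b) < 100)%Z.
Proof.
  intros Hb.
  assert (H : forallb (fun b => (0 <? Z.abs (height b)) && (Z.abs (height b) <? 100))%Z
                      (zroots t) = true) by (destruct t; reflexivity).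
  rewrite forallb_forall in H. specialize (H b Hb). rewrite andb_true_iff, !Z.ltb_lt in H. exact H.
Qed.

Lemma Int_part_rval_base_point t b : In b (zroots t) ->
  Int_part (rval t b (base_point t)) = base_floor b.
Proof.
  intros Hb. pose proof (height_bounds t b Hb) as Hh. rewrite rval_base_point. unfold base_floor.
  destruct (Z.ltb_spec 0 (height b)) as [Hpos | Hneg]; apply Int_part_eq.
  - assert (1 <= IZR (height b) <= 99) by (split; apply IZR_le; lia). lra.
  - assert (-99 <= IZR (height b) <= -1) by (split; apply IZR_le; lia). lra.
Qed.

Lemma generic_base_point t : generic t (base_point t).
Proof.
  intros b Hb n Hn. pose proof (height_bounds t b Hb). rewrite rval_base_point in Hn.
  assert (Heq : IZR (height b) = IZR (100 * n)) by (rewrite mult_IZR; lra).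
  apply eq_IZR in Heq. lia.
Qed.

Lemma sep_refl_base_point t a k : In a (zroots t) ->
  sep t (refl t (IZR2 a) (IZR k) (base_point t)) (base_point t) =
  zsum (fun b => Z.abs (base_floor (zrefl t a b) + k * cartan t a b - base_floor b)) (zpos_roots t).
Proof.
  intros Ha. apply zsum_ext. intros b Hb. unfold floor_dist.
  assert (Hb' : In b (zroots t)) by (apply in_or_app; left; exact Hb).
  rewrite rval_refl_zrefl, Int_part_add_IZR, !Int_part_rval_base_point by (auto using zrefl_root).
  reflexivity.
Qed.

Definition simple_root (t : rtype) (s : gen) : Z * Z :=
  match s with S0 => ztheta t | S1 => (1,0)%Z | S2 => (0,1)%Z end.

Definition simple_level (s : gen) : Z := match s with S0 => 1%Z | _ => 0%Z end.

Lemma simple_refl t s v :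
  simple t s v = refl t (IZR2 (simple_root t s)) (IZR (simple_level s)) v.
Proof. destruct t, s; reflexivity. Qed.

Lemma simple_root_in t s : In (simple_root t s) (zroots t).
Proof. destruct t, s; cbn; tauto. Qed.

Lemma generic_simple t s v : generic t v -> generic t (simple t s v).
Proof. intros Hv. rewrite simple_refl. apply generic_refl; [apply simple_root_in | exact Hv]. Qed.

Lemma simple_involutive t s v : simple t s (simple t s v) = v.
Proof. rewrite !simple_refl. apply refl_involutive, ip_root_neq0, simple_root_in. Qed.

Lemma sep_simple_base_point t s : sep t (simple t s (base_point t)) (base_point t) = 1%Z.
Proof.
  rewrite simple_refl, sep_refl_base_point by apply simple_root_in. destruct t, s; reflexivity.
Qed.

(* sep (s v) p = sep v (s p), and s p lies across exactly one wall from p. *)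
Lemma sep_simple_step t s v : generic t v ->
  sep t (simple t s v) (base_point t) = (sep t v (base_point t) + 1)%Z \/
  (sep t (simple t s v) (base_point t) + 1 = sep t v (base_point t))%Z.
Proof.
  intros Hv. set (p := base_point t).
  assert (Hsp : generic t (simple t s p)) by apply generic_simple, generic_base_point.
  assert (Hswap : sep t (simple t s v) p = sep t v (simple t s p)).
  { rewrite <- (simple_involutive t s p) at 1. rewrite !(simple_refl t s).
    apply sep_refl_refl; [apply simple_root_in | exact Hv | rewrite <- simple_refl; exact Hsp]. }
  pose proof (sep_simple_base_point t s) as Hone. fold p in Hone.
  pose proof (sep_sym t p (simple t s p)).
  pose proof (sep_triangle t v p (simple t s p)). pose proof (sep_triangle t v (simple t s p) p).
  destruct (sep_cycle_even t v p (simple t s p)) as [q Hq].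
  lia.
Qed.

Lemma pos_root_fundamental t b v : In b (zpos_roots t) ->
  0 < rval t (1,0)%Z v -> 0 < rval t (0,1)%Z v -> rval t (ztheta t) v < 1 ->
  0 < rval t b v < 1 /\ base_floor b = 0%Z.
Proof.
  intros Hb H1 H2 H3. rewrite (rval_linear t b). rewrite (rval_linear t (ztheta t)) in H3.
  destruct t; cbn in Hb; repeat destruct Hb as [<- | Hb]; try contradiction;
    cbn [fst snd ztheta] in *; (split; [lra | reflexivity]).
Qed.

Lemma sep_fundamental t v :
  0 < rval t (1,0)%Z v -> 0 < rval t (0,1)%Z v -> rval t (ztheta t) v < 1 ->
  sep t v (base_point t) = 0%Z.
Proof.
  intros H1 H2 H3. apply zsum_zero. intros b Hb.
  destruct (pos_root_fundamental t b v Hb H1 H2 H3) as [Hv Hbase].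
  unfold floor_dist. rewrite Int_part_rval_base_point, Hbase by (apply in_or_app; left; exact Hb).
  rewrite (Int_part_eq _ 0) by lra. reflexivity.
Qed.

Lemma sep_descent t v : generic t v -> (0 < sep t v (base_point t))%Z ->
  exists s, (sep t (simple t s v) (base_point t) + 1 = sep t v (base_point t))%Z.
Proof.
  intros Hv Hpos.
  assert (Hwall : forall s,
    rval t (simple_root t s) (base_point t) < IZR (simple_level s) < rval t (simple_root t s) v \/
    rval t (simple_root t s) v < IZR (simple_level s) < rval t (simple_root t s) (base_point t) ->
    exists s', (sep t (simple t s' v) (base_point t) + 1 = sep t v (base_point t))%Z).
  { intros s Hs. exists s.
    pose proof (sep_refl_lt t _ _ v _ (simple_root_in t s) Hv (generic_base_point t) Hs) as Hlt.
    rewrite <- simple_refl in Hlt. destruct (sep_simple_step t s v Hv); lia. }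
  assert (Htheta : rval t (ztheta t) (base_point t) < 1)
    by (rewrite rval_base_point; destruct t; cbn; lra).
  destruct (Rlt_le_dec (rval t (1,0)%Z v) 0) as [H1 | H1].
  { apply (Hwall S1). right. cbn. rewrite rval_base_point. cbn. lra. }
  destruct (Rlt_le_dec (rval t (0,1)%Z v) 0) as [H2 | H2].
  { apply (Hwall S2). right. cbn. rewrite rval_base_point. cbn. lra. }
  destruct (Rlt_le_dec 1 (rval t (ztheta t) v)) as [H3 | H3].
  { apply (Hwall S0). left. cbn. lra. }
  exfalso. rewrite sep_fundamental in Hpos; [lia | ..].
  - pose proof (Hv (1,0)%Z (simple_root_in t S1) 0%Z). lra.
  - pose proof (Hv (0,1)%Z (simple_root_in t S2) 0%Z). lra.
  - pose proof (Hv (ztheta t) (simple_root_in t S0) 1%Z). lra.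
Qed.


Lemma word_eval_cons t s w v : word_eval t (s :: w) v = simple t s (word_eval t w v).
Proof. reflexivity. Qed.

Lemma word_eval_app t w1 w2 v : word_eval t (w1 ++ w2) v = word_eval t w1 (word_eval t w2 v).
Proof.
  induction w1 as [|s w1 IH]; [reflexivity|]. cbn [app]. rewrite !word_eval_cons, IH. reflexivity.
Qed.

Lemma word_eval_rev t w v : word_eval t w (word_eval t (rev w) v) = v.
Proof.
  revert v. induction w as [|s w IH]; intros v; [reflexivity|]. cbn [rev].
  rewrite word_eval_app, word_eval_cons. change (word_eval t [s] v) with (simple t s v).
  rewrite IH. apply simple_involutive.
Qed.

Lemma represents_conj t x g h w0 w1 w2 :
  represents t w0 x -> represents t w1 (fun v => g (x v)) -> represents t w2 h ->
  represents t (w1 ++ rev w0 ++ w2) (fun v => g (h v)).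
Proof. intros R0 R1 R2 v. rewrite !word_eval_app, <- R1, R0, word_eval_rev, R2. reflexivity. Qed.

Lemma generic_word t w : generic t (word_eval t w (base_point t)).
Proof.
  induction w as [|s w IH]; [apply generic_base_point|].
  rewrite word_eval_cons. apply generic_simple, IH.
Qed.

Lemma sep_word t w : exists q : nat,
  (sep t (word_eval t w (base_point t)) (base_point t) + 2 * Z.of_nat q = Z.of_nat (length w))%Z.
Proof.
  induction w as [|s w [q IH]].
  - exists 0%nat. cbn [word_eval fold_right length]. rewrite sep_diag. reflexivity.
  - rewrite word_eval_cons. cbn [length]. rewrite Nat2Z.inj_succ.
    destruct (sep_simple_step t s _ (generic_word t w)) as [H | H].
    + exists q. lia.
    + exists (S q). rewrite Nat2Z.inj_succ. lia.
Qed.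

(** * Only the identity of W fixes A0 *)

Definition coords (t : rtype) (v : E) : R * R := (rval t (1,0)%Z v, rval t (0,1)%Z v).

Lemma coords_inj t u v : coords t u = coords t v -> u = v.
Proof.
  destruct t, u, v; unfold coords, rval, ip, IZR2; cbn [gram fst snd];
  intros H; injection H as H1 H2; f_equal; lra.
Qed.

Lemma coords_base_point t : coords t (base_point t) = (1/100, 1/100).
Proof. unfold coords. rewrite !rval_base_point. reflexivity. Qed.

Definition zmat := ((Z * Z) * (Z * Z))%type.

Definition mat_id : zmat := ((1, 0), (0, 1))%Z.

Definition mat_vec (g : zmat) (x : Z * Z) : Z * Z :=
  let '((g11, g12), (g21, g22)) := g in (g11 * fst x + g12 * snd x, g21 * fst x + g22 * snd x)%Z.

Definition mat_mul (g h : zmat) : zmat :=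
  let '((h11, h12), (h21, h22)) := h in
  let '(c11, c21) := mat_vec g (h11, h21) in
  let '(c12, c22) := mat_vec g (h12, h22) in ((c11, c12), (c21, c22)).

Definition mat_act (g : zmat) (l : Z * Z) (y : R * R) : R * R :=
  let '((g11, g12), (g21, g22)) := g in
  (IZR g11 * fst y + IZR g12 * snd y + IZR (fst l),
   IZR g21 * fst y + IZR g22 * snd y + IZR (snd l)).

Lemma mat_act_mul g h l m y :
  mat_act g l (mat_act h m y) =
  mat_act (mat_mul g h) (fst (mat_vec g m) + fst l, snd (mat_vec g m) + snd l)%Z y.
Proof.
  destruct g as [[g11 g12] [g21 g22]], h as [[h11 h12] [h21 h22]].
  unfold mat_act, mat_mul, mat_vec; cbn [fst snd].
  f_equal; repeat rewrite ?plus_IZR, ?mult_IZR; ring.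
Qed.

Definition zmat_eq_dec (g h : zmat) : {g = h} + {g <> h}.
Proof. repeat decide equality. Defined.

Definition refl_mat (t : rtype) (a : Z * Z) : zmat :=
  let '(c1, c2) := coroot t a in
  ((1 - c1 * fst a, - c1 * snd a), (- c2 * fst a, 1 - c2 * snd a))%Z.

Lemma coords_refl t a k v : In a (zroots t) ->
  coords t (refl t (IZR2 a) (IZR k) v) =
  mat_act (refl_mat t a) (k * fst (coroot t a), k * snd (coroot t a))%Z (coords t v).
Proof.
  intros Ha. unfold coords. rewrite !rval_refl, (rval_linear t a v) by exact Ha.
  unfold cartan, refl_mat, mat_act. destruct (coroot t a) as [c1 c2]. cbn [fst snd].
  f_equal; repeat rewrite ?plus_IZR, ?mult_IZR, ?minus_IZR, ?opp_IZR; ring.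
Qed.

Definition coroot_lat (t : rtype) (m : Z * Z) : Z * Z :=
  (fst m * fst (coroot t (1,0)) + snd m * fst (coroot t (0,1)),
   fst m * snd (coroot t (1,0)) + snd m * snd (coroot t (0,1)))%Z.

Definition simple_coroot_coeffs (t : rtype) (s : gen) : Z * Z :=
  match t, s with
  | G2, S0 => (1, 2)
  | _, S0 => (1, 1)
  | _, S1 => (1, 0)
  | _, S2 => (0, 1)
  end%Z.

Lemma coroot_lat_simple t s : coroot_lat t (simple_coroot_coeffs t s) = coroot t (simple_root t s).
Proof. destruct t, s; reflexivity. Qed.

Lemma refl_mat_coroot_lat t a k n m : coroot_lat t n = coroot t a -> exists m',
  (fst (mat_vec (refl_mat t a) (coroot_lat t m)) + k * fst (coroot t a),
   snd (mat_vec (refl_mat t a) (coroot_lat t m)) + k * snd (coroot t a))%Z = coroot_lat t m'.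
Proof.
  intros Hn. set (c := (k - (fst a * fst (coroot_lat t m) + snd a * snd (coroot_lat t m)))%Z).
  exists (fst m + c * fst n, snd m + c * snd n)%Z.
  unfold refl_mat. rewrite <- Hn. unfold c, coroot_lat, mat_vec. cbn [fst snd]. f_equal; ring.
Qed.

(* Products of at most 6 reflections s1, s2 exhaust the finite Weyl group (6 is the length of
   its longest element for G2); closure is checked by computation in [weyl_mats_closed]. *)
Fixpoint weyl_words (t : rtype) (n : nat) : list zmat :=
  match n with
  | O => [mat_id]
  | S n => mat_id :: flat_map (fun g => [mat_mul (refl_mat t (1,0)%Z) g;
                                         mat_mul (refl_mat t (0,1)%Z) g]) (weyl_words t n)
  end.

Definition weyl_mats (t : rtype) : list zmat := weyl_words t 6.

Lemma weyl_mats_closed t s g : In g (weyl_mats t) ->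
  In (mat_mul (refl_mat t (simple_root t s)) g) (weyl_mats t).
Proof.
  intros Hg.
  assert (H : forallb (fun g => forallb (fun s =>
                inb zmat_eq_dec (mat_mul (refl_mat t (simple_root t s)) g) (weyl_mats t))
                [S0; S1; S2]) (weyl_mats t) = true) by (destruct t; vm_compute; reflexivity).
  rewrite forallb_forall in H. specialize (H g Hg). rewrite forallb_forall in H.
  apply (inb_In zmat_eq_dec), H. destruct s; cbn; tauto.
Qed.

(* The translation part must lie in the coroot lattice: the extended affine Weyl group,
   whose translations form the coweight lattice, contains rotations of A0. *)
Definition in_affine_weyl (t : rtype) (f : E -> E) : Prop :=
  exists g m, In g (weyl_mats t) /\
              forall v, coords t (f v) = mat_act g (coroot_lat t m) (coords t v).

Lemma word_affine_weyl t w : in_affine_weyl t (word_eval t w).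
Proof.
  induction w as [|s w [g [m [Hg Hf]]]].
  - exists mat_id, (0, 0)%Z. split; [destruct t; left; reflexivity|].
    intros v. change (word_eval t [] v) with v. unfold mat_act, mat_id, coroot_lat.
    destruct (coords t v) as [y1 y2]. cbn [fst snd]. rewrite !Z.mul_0_l, !Z.add_0_l.
    f_equal; ring.
  - destruct (refl_mat_coroot_lat t (simple_root t s) (simple_level s) _ m (coroot_lat_simple t s))
      as [m' Hm'].
    exists (mat_mul (refl_mat t (simple_root t s)) g), m'. split; [apply weyl_mats_closed, Hg|].
    intros v. rewrite word_eval_cons, simple_refl, coords_refl, Hf, mat_act_mul
      by apply simple_root_in.
    cbn [fst snd]. rewrite Hm'. reflexivity.
Qed.

Definition row_sums_ok (g : zmat) : bool :=
  let '((g11, g12), (g21, g22)) := g in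
  ((Z.abs (g11 + g12) <=? 5) && (Z.abs (g21 + g22) <=? 5)
   && implb ((0 <? g11 + g12) && (0 <? g21 + g22)) (inb zmat_eq_dec g [mat_id]))%Z.

Lemma weyl_mat_row_sums t g11 g12 g21 g22 : In ((g11, g12), (g21, g22)) (weyl_mats t) ->
  (Z.abs (g11 + g12) <= 5 /\ Z.abs (g21 + g22) <= 5 /\
   (0 < g11 + g12 -> 0 < g21 + g22 -> ((g11, g12), (g21, g22)) = mat_id))%Z.
Proof.
  intros Hg.
  assert (H : forallb row_sums_ok (weyl_mats t) = true) by (destruct t; vm_compute; reflexivity).
  rewrite forallb_forall in H. specialize (H _ Hg). unfold row_sums_ok in H.
  rewrite !andb_true_iff, !Z.leb_le in H. destruct H as [[H1 H2] H3].
  repeat split; try assumption. intros Hp1 Hp2.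
  apply Z.ltb_lt in Hp1, Hp2. rewrite Hp1, Hp2 in H3. cbn [andb implb] in H3.
  apply (inb_In zmat_eq_dec) in H3. destruct H3 as [H3 | []]. symmetry. exact H3.
Qed.

Lemma coroot_lat_small t m :
  (-1 < fst (coroot_lat t m))%Z -> (-1 < snd (coroot_lat t m))%Z ->
  (fst (ztheta t) * fst (coroot_lat t m) + snd (ztheta t) * snd (coroot_lat t m) < 2)%Z ->
  coroot_lat t m = (0, 0)%Z.
Proof.
  unfold coroot_lat. set (c1 := coroot t (1,0)%Z). set (c2 := coroot t (0,1)%Z).
  destruct t; vm_compute in c1, c2; subst c1 c2; cbn [fst snd ztheta]; intros; f_equal; lia.
Qed.

Lemma sep_zero_floor t v b : sep t v (base_point t) = 0%Z -> In b (zpos_roots t) ->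
  Int_part (rval t b v) = base_floor b.
Proof.
  intros Hsep Hb.
  assert (Hterm : (floor_dist (rval t b v) (rval t b (base_point t)) <= sep t v (base_point t))%Z).
  { apply (zsum_term_le (fun b => floor_dist (rval t b v) (rval t b (base_point t)))); [|exact Hb].
    intros y _. apply Z.abs_nonneg. }
  unfold floor_dist in Hterm.
  rewrite Int_part_rval_base_point in Hterm by (apply in_or_app; left; exact Hb).
  lia.
Qed.

Lemma affine_weyl_fixed t f : in_affine_weyl t f -> generic t (f (base_point t)) ->
  sep t (f (base_point t)) (base_point t) = 0%Z -> forall v, f v = v.
Proof.
  intros [g [m [Hg Hf]]] Hgen Hsep. set (y := f (base_point t)) in *.
  assert (Hin : forall b, In b (zpos_roots t) -> base_floor b = 0%Z -> 0 < rval t b y < 1).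
  { intros b Hb H0. pose proof (sep_zero_floor t _ b Hsep Hb) as Hfl. rewrite H0 in Hfl.
    pose proof (Int_part_bounds (rval t b y)) as Hbd. rewrite Hfl in Hbd.
    pose proof (Hgen b ltac:(apply in_or_app; left; exact Hb) 0%Z). lra. }
  assert (H1 := Hin (1,0)%Z ltac:(destruct t; cbn; tauto) eq_refl).
  assert (H2 := Hin (0,1)%Z ltac:(destruct t; cbn; tauto) eq_refl).
  assert (H3 := Hin (ztheta t) ltac:(destruct t; cbn; tauto) ltac:(destruct t; reflexivity)).
  rewrite (rval_linear t (ztheta t)) in H3.
  pose proof (Hf (base_point t)) as Hp. rewrite coords_base_point in Hp.
  destruct g as [[g11 g12] [g21 g22]]. destruct (weyl_mat_row_sums t _ _ _ _ Hg) as [R1 [R2 Hid]].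
  assert (Hrows : -5 <= IZR g11 + IZR g12 <= 5 /\ -5 <= IZR g21 + IZR g22 <= 5).
  { rewrite <- !plus_IZR. repeat split; apply IZR_le; lia. }
  destruct (coroot_lat t m) as [l1 l2] eqn:Hl. unfold coords, mat_act in Hp. cbn [fst snd] in Hp.
  injection Hp as E1 E2. fold y in E1, E2. rewrite E1, E2 in *.
  assert (Hl0 : (l1, l2) = (0, 0)%Z).
  { rewrite <- Hl. apply coroot_lat_small; rewrite Hl; cbn [fst snd]; apply lt_IZR; [lra | lra |].
    rewrite plus_IZR, !mult_IZR. destruct t; cbn [fst snd ztheta] in H3 |- *; lra. }
  injection Hl0 as -> ->.
  rewrite Hid in Hf by (apply lt_IZR; rewrite plus_IZR; lra).
  intros v. apply (coords_inj t). rewrite Hf. unfold mat_act, mat_id.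
  destruct (coords t v). cbn [fst snd]. f_equal; ring.
Qed.

(** * Coxeter length as a wall count *)

Lemma word_shorten t N : forall w,
  sep t (word_eval t w (base_point t)) (base_point t) = Z.of_nat N ->
  exists w', length w' = N /\ represents t w' (word_eval t w).
Proof.
  induction N as [|N IH]; intros w HN.
  - exists []. split; [reflexivity|]. intros v.
    exact (affine_weyl_fixed t _ (word_affine_weyl t w) (generic_word t w) HN v).
  - destruct (sep_descent t _ (generic_word t w)) as [s Hs]; [lia|].
    destruct (IH (s :: w)) as [w' [Hlen Hrep]]; [rewrite word_eval_cons; lia|].
    exists (s :: w'). split; [cbn; lia|]. intros v.
    rewrite word_eval_cons, <- Hrep, word_eval_cons, simple_involutive. reflexivity.
Qed.

Lemma coxeter_length_sep t x n : coxeter_length t x n ->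
  Z.of_nat n = sep t (x (base_point t)) (base_point t) /\ exists w, represents t w x.
Proof.
  intros [[w [Hlen Hrep]] Hmin]. split; [|exists w; exact Hrep].
  rewrite (Hrep (base_point t)). destruct (sep_word t w) as [q Hq].
  pose proof (sep_nonneg t (word_eval t w (base_point t)) (base_point t)).
  destruct (word_shorten t (Z.to_nat (sep t (word_eval t w (base_point t)) (base_point t))) w)
    as [w' [Hlen' Hrep']].
  { rewrite Z2Nat.id; [reflexivity | assumption]. }
  specialize (Hmin w' (fun v => eq_trans (Hrep v) (Hrep' v))). lia.
Qed.

Lemma coxeter_length_of_sep t x w n : represents t w x ->
  sep t (x (base_point t)) (base_point t) = Z.of_nat n -> coxeter_length t x n.
Proof.
  intros Hrep Hsep. rewrite (Hrep (base_point t)) in Hsep. split.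
  - destruct (word_shorten t n w Hsep) as [w' [Hlen Hrep']].
    exists w'. split; [exact Hlen|]. intros v. rewrite Hrep. apply Hrep'.
  - intros w' Hrep'. destruct (sep_word t w') as [q Hq].
    rewrite <- (Hrep' (base_point t)), (Hrep (base_point t)), Hsep in Hq. lia.
Qed.

Lemma represents_parity t x w : represents t w x ->
  exists q : nat,
    (sep t (x (base_point t)) (base_point t) + 2 * Z.of_nat q = Z.of_nat (length w))%Z.
Proof. intros Hrep. rewrite (Hrep (base_point t)). apply sep_word. Qed.

Lemma represents_conj_parity t x g h w0 w1 w2 :
  represents t w0 x -> represents t w1 (fun v => g (x v)) -> represents t w2 h ->
  exists q, (sep t (g (h (base_point t))) (base_point t) + 2 * q =
             sep t (x (base_point t)) (base_point t) + sep t (g (x (base_point t))) (base_point t)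
             + sep t (h (base_point t)) (base_point t))%Z.
Proof.
  intros R0 R1 R2.
  destruct (represents_parity t _ _ (represents_conj t x g h w0 w1 w2 R0 R1 R2)) as [q Hq].
  destruct (represents_parity t _ _ R0) as [q0 Hq0].
  destruct (represents_parity t _ _ R1) as [q1 Hq1].
  destruct (represents_parity t _ _ R2) as [q2 Hq2].
  rewrite !length_app, length_rev, !Nat2Z.inj_add in Hq. cbv beta in Hq, Hq1.
  exists (Z.of_nat q - Z.of_nat q0 - Z.of_nat q1 - Z.of_nat q2)%Z. lia.
Qed.

Lemma rval_strict_of_generic t a c v : In a (zroots t) -> generic t v ->
  IZR c <= rval t a v <= IZR c + 1 -> IZR c < rval t a v < IZR c + 1.
Proof.
  intros Ha Hv Hc. pose proof (Hv a Ha c) as H0. pose proof (Hv a Ha (c + 1)%Z) as H1.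
  rewrite plus_IZR in H1. split; apply Rnot_le_lt; intros Hle; [apply H0 | apply H1]; lra.
Qed.


Theorem theorem1p3 (t : rtype) (alpha : E) (c : Z) (x : E -> E) (n : nat) :
  In alpha (Phi t) ->
  (forall v, A0 t v -> IZR c <= ip t (x v) alpha <= IZR c + 1) ->
  coxeter_length t x n ->
  coxeter_length t (fun v => refl t alpha (IZR c + 1) (x v)) (S n) ->
  coxeter_length t
    (fun v => refl t alpha (IZR c + 2) (refl t alpha (IZR c + 1) (x v))) (S (S n)) ->
  coxeter_length t (fun v => refl t alpha (IZR c) (x v)) (S n) \/
  ((0 < n)%nat /\ coxeter_length t (fun v => refl t alpha (IZR c) (x v)) (pred n)).
Proof.
  intros Halpha Hstrip H0 H1 H2.
  rewrite Phi_IZR2 in Halpha. apply in_map_iff in Halpha as [a [<- Ha]].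
  rewrite <- plus_IZR in H1. rewrite <- !plus_IZR in H2.
  destruct (coxeter_length_sep t _ _ H0) as [E0 [w0 R0]].
  destruct (coxeter_length_sep t _ _ H1) as [E1 [w1 R1]].
  destruct (coxeter_length_sep t _ _ H2) as [E2 [w2 R2]].
  assert (R : represents t (w1 ++ rev w0 ++ w2) (fun v => refl t (IZR2 a) (IZR c) (x v))).
  { intros v. rewrite <- (refl_parallel t (IZR2 a) c (x v) (ip_root_neq0 t a Ha)).
    exact (represents_conj t _ _ _ _ _ _ R0 R1 R2 v). }
  destruct (represents_conj_parity t _ _ _ _ _ _ R0 R1 R2) as [q Hq].
  rewrite refl_parallel in Hq by exact (ip_root_neq0 t a Ha).
  cbv beta in E1, E2. set (y := x (base_point t)) in *.
  assert (Hy : generic t y) by (unfold y; rewrite (R0 (base_point t)); apply generic_word).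
  pose proof (rval_strict_of_generic t a c y Ha Hy (Hstrip _ (A0_base_point t))) as Hay.
  pose proof (sep_refl_triple t a c y (base_point t) Ha Hy (generic_base_point t) Hay) as Hbounds.
  specialize (Hbounds ltac:(lia) ltac:(lia)).
  pose proof (sep_nonneg t (refl t (IZR2 a) (IZR c) y) (base_point t)).
  set (l0 := sep t (refl t (IZR2 a) (IZR c) y) (base_point t)) in *.
  assert (Hcases : l0 = Z.of_nat (S n) \/ ((0 < n)%nat /\ l0 = Z.of_nat (pred n))) by lia.
  destruct Hcases as [Hsep | [Hn Hsep]]; [left | right; split; [exact Hn|]];
    exact (coxeter_length_of_sep t _ _ _ R Hsep).
Qed.
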